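(* Fix $\tau>0$ and suppose that for every $\lambda\in\Lambda$ the problem $\max_{\pi\in\Pi}\mathcal{L}_\tau(\pi,\lambda)$ has exactly one optimal policy $\pi^*_{\tau,\lambda}$. Then $d_\tau$ is differentiable at every $\lambda\in\Lambda$, and $$\nabla d_\tau(\lambda)=V^{\pi^*_{\tau,\lambda}}(\rho)-c.$$
   Context: Finite MDP with state space $\mathcal S$, action space $\mathcal A$, transition kernel $\mathrm P$, discount $\gamma\in(0,1)$, initial distribution $\rho$, positive finite rewards $r_0,\dots,r_m$. $\Pi$ is the (compact) set of stationary policies. $V_i^\pi(\rho)=\mathbb{E}[\sum_{t\ge0}\gamma^tr_i(s_t,a_t)]$ with $s_0\sim\rho$, $a_t\sim\pi(\cdot\mid s_t)$, $s_{t+1}\sim\mathrm P(\cdot\mid s_t,a_t)$; $V^\pi(\rho)=(V_1^\pi(\rho),\dots,V_m^\pi(\rho))^\top$; $c\in\mathbb{R}^m$. Discounted entropy $\mathcal H(\pi)=-\mathbb{E}[\sum_{t\ge0}\gamma^t\log\pi(a_t\mid s_t)]$ (same dynamics). $\mathcal L_\tau(\pi,\lambda)=V_0^\pi(\rho)+\langle\lambda,V^\pi(\rho)-c\rangle+\tau\mathcal H(\pi)$ for $\lambda\in\mathbb{R}^m$, and $d_\tau(\lambda)=\max_{\pi\in\Pi}\mathcal L_\tau(\pi,\lambda)$. Given $\xi>0$ (the Slater constant: a policy $\pi_\xi$ with $V_i^{\pi_\xi}(\rho)\ge c_i+\xi$ for all $i$), $r_{0,\max}=\max_{s,a}r_0(s,a)$,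 $B_\lambda=\frac{r_{0,\max}+\log|\mathcal A|}{(1-\gamma)\xi}$ and $\Lambda=\{\lambda\in\mathbb{R}^m_+:\|\lambda\|_1\le B_\lambda\}$. *)

From HB Require Import structures.
From mathcomp Require Import all_boot all_order all_algebra.
From mathcomp Require Import all_classical all_reals all_analysis.
Set Implicit Arguments. Unset Strict Implicit. Unset Printing Implicit Defensive.
Import Order.TTheory GRing.Theory Num.Theory.
Import numFieldNormedType.Exports.
Local Open Scope ring_scope.
Local Open Scope classical_set_scope.

Section MDP.
Variables (R : realType) (S A : finType).

(* A stationary (stochastic) policy pi(a|s) = pi s a. *)
Definition is_policy (pi : S -> A -> R) : Prop :=
  (forall s a, 0 <= pi s a) /\ (forall s, \sum_(a : A) pi s a = 1).

Definition Policies : set (S -> A -> R) := [set pi | is_policy pi].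

(* Distribution of s_t when s_0 ~ rho, a_t ~ pi(.|s_t), s_{t+1} ~ P(.|s_t,a_t). *)
Fixpoint state_dist (P : S -> A -> S -> R) (rho : S -> R)
    (pi : S -> A -> R) (t : nat) : S -> R :=
  match t with
  | O => rho
  | t'.+1 => fun s' => \sum_(s : S) \sum_(a : A)
        state_dist P rho pi t' s * pi s a * P s a s'
  end.

Definition step_expect (P : S -> A -> S -> R) (rho : S -> R)
    (pi : S -> A -> R) (f : S -> A -> R) (t : nat) : R :=
  \sum_(s : S) \sum_(a : A) state_dist P rho pi t s * pi s a * f s a.

(* E[ sum_t gamma^t f(s_t,a_t) ] = sum_t gamma^t E[f(s_t,a_t)] *)
Definition disc_value (P : S -> A -> S -> R) (rho : S -> R) (gamma : R)
    (pi : S -> A -> R) (f : S -> A -> R) : R :=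
  \big[+%R/0%R]_(0 <= t <oo) (gamma ^+ t * step_expect P rho pi f t).

Definition Vr P rho gamma pi (r : S -> A -> R) := disc_value P rho gamma pi r.

Definition entropy P rho gamma (pi : S -> A -> R) : R :=
  - disc_value P rho gamma pi (fun s a => ln (pi s a)).

Definition lagr P rho gamma (r0 : S -> A -> R) (m : nat)
    (r : 'I_m -> S -> A -> R) (c : 'rV[R]_m) (tau : R)
    (pi : S -> A -> R) (lam : 'rV[R]_m) : R :=
  Vr P rho gamma pi r0
  + \sum_(i < m) lam ord0 i * (Vr P rho gamma pi (r i) - c ord0 i)
  + tau * entropy P rho gamma pi.

(* d_tau(lambda) = max_{pi in Pi} L_tau(pi, lambda) (the max is attained) *)
Definition dual P rho gamma r0 m r c tau (lam : 'rV[R]_m) : R :=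
  sup [set lagr P rho gamma r0 r c tau pi lam | pi in Policies].

(* r_{0,max} = max_{s,a} r_0(s,a) (rewards are positive, so starting at 0 is harmless) *)
Definition rmax (r0 : S -> A -> R) : R :=
  \big[Num.max/0]_(s : S) \big[Num.max/0]_(a : A) r0 s a.

Definition Blam (r0 : S -> A -> R) (gamma xi : R) : R :=
  (rmax r0 + ln (#|A|%:R)) / ((1 - gamma) * xi).

Definition LamSet (m : nat) (r0 : S -> A -> R) (gamma xi : R) : set 'rV[R]_m :=
  [set lam | (forall i, 0 <= lam ord0 i) /\
             \sum_(i < m) `|lam ord0 i| <= Blam r0 gamma xi].

End MDP.

(* Danskin's theorem.  Encode policies as points of a compact set K (row vectors
   indexed by S * A).  Then d_tau(lam) is the supremum over K of
   L(pi, lam) = F pi + <lam, g pi>, with F pi = V_0^pi + tau H(pi) and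
   g_i pi = V_i^pi - c_i, and F and g are continuous on K: the discounted sums are
   uniform limits of continuous functions of pi, because x ln x is continuous and
   bounded on [0, 1].  The optimal policy pi* gives the lower bound
   d(lam + h) >= d(lam) + <g pi*, h>.  For the upper bound, compactness and
   uniqueness of pi* show that every pi with L(pi, lam) > d(lam) - delta has
   g pi within eps of g pi*.  Any other pi falls short by delta, which a small h
   cannot make up.  Hence d(lam + h) <= d(lam) + <g pi*, h> + eps |h|. *)
From HB Require Import structures.
From mathcomp Require Import all_boot all_order all_algebra.
From mathcomp Require Import all_classical all_reals all_analysis.
From mathcomp Require Import ring lra.
Import Order.TTheory GRing.Theory Num.Theory.
Import numFieldNormedType.Exports.
Unset Printing Implicit Defensive.
Local Open Scope ring_scope.
Local Open Scope classical_set_scope.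

Lemma cvgr_sum {R : realType} {T : Type} (F : set_system T) {FF : Filter F}
    (I : finType) (f : I -> T -> R) (a : I -> R) :
  (forall i, f i x @[x --> F] --> a i) -> \sum_i f i x @[x --> F] --> \sum_i a i.
Proof. by move=> fa; apply: cvg_big => //; exact: add_continuous. Qed.

Section DotProduct.
Context {R : realType} {m : nat}.

Definition dotr (v : 'I_m -> R) (h : 'rV[R]_m) : R := \sum_i v i * h ord0 i.

Lemma dotr_is_linear v : linear (dotr v).
Proof.
move=> k x y; rewrite /dotr /= scaler_sumr -big_split /=.
by apply: eq_bigr => i _; rewrite !mxE mulrDr mulrCA.
Qed.

HB.instance Definition _ v :=
  GRing.isLinear.Build R 'rV[R]_m R _ (dotr v) (dotr_is_linear v).

Lemma continuous_dotr v : continuous (dotr v).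
Proof.
move=> h; apply: (@cvgr_sum _ _ _ (nbhs_filter h)) => i /=.
apply: cvgM; first exact: cvg_cst.
exact: coord_continuous.
Qed.

Lemma normr_coord_le (h : 'rV[R]_m) i : `|h ord0 i| <= `|h|.
Proof.
rewrite [leRHS]/Num.norm /= mx_normrE.
by apply/bigmax_geP; right; exists (ord0, i).
Qed.

Lemma normr_dotr_le v h : `|dotr v h| <= (\sum_i `|v i|) * `|h|.
Proof.
rewrite /dotr big_distrl /=; apply: le_trans (ler_norm_sum _ _ _) _.
by apply: ler_sum => i _; rewrite normrM ler_wpM2l // normr_coord_le.
Qed.

End DotProduct.

Section Danskin.
Context {R : realType} {T : topologicalType} (K : set T) {m : nat}.
Variables (F : T -> R) (g : 'I_m -> T -> R).

Definition lagrangian (mu : 'rV[R]_m) x := F x + dotr (g^~ x) mu.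
Definition dual_fun mu := sup [set lagrangian mu x | x in K].

Lemma lagrangianD mu h x : lagrangian (mu + h) x = lagrangian mu x + dotr (g^~ x) h.
Proof. by rewrite /lagrangian linearD addrA. Qed.

Hypotheses (compactK : compact K) (contF : {within K, continuous F}).
Hypothesis contg : forall i, {within K, continuous g i}.

Lemma continuous_lagrangian mu : {within K, continuous lagrangian mu}.
Proof.
move=> x; apply: cvgD; first exact: contF.
by apply: cvgr_sum => i; apply: cvgM; [exact: contg | exact: cvg_cst].
Qed.

Lemma compact_continuous_ub {f : T -> R} : {within K, continuous f} ->
  exists M, forall x, K x -> f x <= M.
Proof.
move=> cf; have [->|K0] := eqVneq K set0; first by exists 0.
have [c _ fc] := compact_EVT_max (proj1 (set0P K) K0) compactK cf.
by exists (f c) => x Kx; apply: fc; rewrite inE.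
Qed.

Variables (x0 : T) (lam : 'rV[R]_m).
Hypotheses (Kx0 : K x0) (x0_max : lagrangian lam x0 = dual_fun lam).
Hypothesis argmax_g :
  forall x, K x -> lagrangian lam x = dual_fun lam -> forall i, g i x = g i x0.

Lemma has_sup_lagrangian mu : has_sup [set lagrangian mu x | x in K].
Proof.
split; first by exists (lagrangian mu x0), x0.
have [M LM] := compact_continuous_ub (continuous_lagrangian mu).
by exists M => _ [x Kx <-]; exact: LM.
Qed.

Lemma lagrangian_le_dual_fun mu x : K x -> lagrangian mu x <= dual_fun mu.
Proof. by move=> Kx; apply: (sup_upper_bound (has_sup_lagrangian mu)); exists x. Qed.

Lemma dual_fun_le mu b : (forall x, K x -> lagrangian mu x <= b) -> dual_fun mu <= b.
Proof.
move=> Lb; apply: ge_sup; first by exists (lagrangian mu x0), x0.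
by move=> _ [x /Lb ? <-].
Qed.

Let gdist x := \sum_i `|g i x - g i x0|.

Lemma continuous_gdist : {within K, continuous gdist}.
Proof.
move=> x; apply: cvgr_sum => i; apply: cvg_norm.
by apply: cvgB; [exact: contg | exact: cvg_cst].
Qed.

(* [max (dual_fun lam - lagrangian lam, eps - gdist)] is continuous and positive
   on K, since maximizers have [gdist = 0]; its minimum on K is the [delta]. *)
Lemma near_argmax_close eps : 0 < eps -> exists2 delta, 0 < delta &
  forall x, K x -> dual_fun lam - delta < lagrangian lam x -> gdist x < eps.
Proof.
move=> eps0.
pose om := (fun x => dual_fun lam - lagrangian lam x) \max (fun x => eps - gdist x).
have contom : {within K, continuous om}.
  apply: max_fun_continuous => x; apply: cvgB; try exact: cvg_cst.
    exact: continuous_lagrangian.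
  exact: continuous_gdist.
have [c /set_mem Kc omc] := compact_EVT_min (ex_intro _ x0 Kx0) compactK contom.
have omc_gt0 : 0 < om c.
  rewrite /om /= lt_max; have [cmax|cnmax] := eqVneq (lagrangian lam c) (dual_fun lam).
    rewrite /gdist big1 ?subr0 ?eps0 ?orbT // => i _.
    by rewrite (argmax_g c Kc cmax i) subrr normr0.
  by rewrite subr_gt0 lt_neqAle cnmax lagrangian_le_dual_fun.
exists (om c) => // x Kx Lx; rewrite ltNge; apply/negP => epsx.
move: (om c) omc_gt0 Lx (omc x (mem_set Kx)) => d d0 Lx.
by rewrite /om /= le_max => /orP[]; lra.
Qed.

Let g0 := g^~ x0.

Lemma dual_fun_shift_ge h : dual_fun lam + dotr g0 h <= dual_fun (h + lam).
Proof. by rewrite -x0_max -lagrangianD [h + lam]addrC; exact: lagrangian_le_dual_fun. Qed.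

Lemma dual_fun_shift_le eps : 0 < eps -> \forall h \near (0 : 'rV[R]_m),
  dual_fun (h + lam) <= dual_fun lam + dotr g0 h + eps * `|h|.
Proof.
move=> eps0; have [delta delta0 close_x0] := near_argmax_close eps eps0.
have [C gdistC] := compact_continuous_ub continuous_gdist.
have C1_gt0 : 0 < `|C| + 1 by rewrite ltr_wpDl.
near=> h.
have h_small : (`|C| + 1) * `|h| < delta.
  rewrite mulrC -ltr_pdivlMr //; near: h.
  exact: (@nbhs0_lt _ 'rV[R]_m _ (divr_gt0 delta0 C1_gt0)).
rewrite [h + lam]addrC; apply: dual_fun_le => x Kx; rewrite lagrangianD.
have -> : dotr (g^~ x) h = dotr g0 h + dotr (fun i => g i x - g i x0) h.
  by rewrite /dotr -big_split; apply: eq_bigr => i _; rewrite /g0 /=; ring.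
have := ler_norm (dotr (fun i => g i x - g i x0) h).
have := normr_dotr_le (fun i => g i x - g i x0) h; rewrite -/(gdist x).
have := lagrangian_le_dual_fun lam x Kx; have := normr_ge0 h.
have [near_max|far] := ltP (dual_fun lam - delta) (lagrangian lam x).
  have : gdist x * `|h| <= eps * `|h|.
    by rewrite ler_wpM2r // ltW // close_x0.
  lra.
have : gdist x * `|h| <= (`|C| + 1) * `|h|.
  by rewrite ler_wpM2r // (le_trans (gdistC x Kx)) // (le_trans (ler_norm C)) ?lerDl.
have : 0 <= eps * `|h| by rewrite mulr_ge0 // ltW.
lra.
Unshelve. all: by end_near.
Qed.

Theorem danskin : differentiable dual_fun lam /\ 'd dual_fun lam = dotr g0 :> (_ -> _).
Proof.
have dual_fun_little_o :
    dual_fun \o shift lam = cst (dual_fun lam) + dotr g0 +o_ (0 : 'rV[R]_m) id.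
  apply/eqaddoP => eps eps0; near=> h.
  have := dual_fun_shift_ge h.
  have : dual_fun (h + lam) <= dual_fun lam + dotr g0 h + eps * `|h|.
    by near: h; exact: dual_fun_shift_le.
  by rewrite /= !fctE ler_norml; lra.
have dE := diff_unique (continuous_dotr g0) dual_fun_little_o.
split; last by rewrite dE.
by apply/diff_locallyP; rewrite dE; split => //; exact: continuous_dotr.
Unshelve. all: by end_near.
Qed.

End Danskin.

Section DiscountedSeries.
Context {R : realType} (gamma : R).
Hypothesis gamma01 : 0 < gamma < 1.

Let gamma_ge0 : 0 <= gamma. Proof. by case/andP: gamma01 => /ltW. Qed.
Let normr_gamma_lt1 : `|gamma| < 1.
Proof. by rewrite ger0_norm //; case/andP: gamma01. Qed.

Lemma discounted_partial_tail {w : nat -> R} {M : R} : (forall t, `|w t| <= M) ->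
  forall N n, (N <= n)%N ->
  `|series (fun t => gamma ^+ t * w t) n - series (fun t => gamma ^+ t * w t) N|
    <= M * gamma ^+ N / (1 - gamma).
Proof.
move=> wM N n Nn; have M0 : 0 <= M := le_trans (normr_ge0 _) (wM 0%N).
rewrite sub_series_geq //; apply: le_trans (ler_norm_sum _ _ _) _.
apply: (@le_trans _ _ (\sum_(N <= t < n) M * gamma ^+ t)).
  apply: ler_sum => t _; rewrite normrM ger0_norm ?exprn_ge0 // mulrC.
  by rewrite ler_wpM2r ?exprn_ge0.
rewrite -big_distrr /= -mulrA ler_wpM2l // -(subnKC Nn) geometric_partial_tail.
by apply: geometric_le_lim; rewrite ?exprn_ge0; case/andP: gamma01.
Qed.

Lemma is_cvg_discounted_series {w : nat -> R} {M : R} : (forall t, `|w t| <= M) ->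
  cvgn (series (fun t => gamma ^+ t * w t)).
Proof.
move=> wM; apply: normed_cvg; apply: (@series_le_cvg _ _ (geometric M gamma)).
- by move=> n; exact: normr_ge0.
- by move=> n; rewrite /geometric /= mulr_ge0 ?exprn_ge0 // (le_trans _ (wM 0%N)).
- move=> n /=; rewrite /geometric /= normrM ger0_norm ?exprn_ge0 // mulrC.
  by rewrite ler_wpM2r ?exprn_ge0.
- exact: is_cvg_geometric_series.
Qed.

Lemma discounted_series_tail {w : nat -> R} {M : R} : (forall t, `|w t| <= M) -> forall N,
  `|limn (series (fun t => gamma ^+ t * w t)) - series (fun t => gamma ^+ t * w t) N|
    <= M * gamma ^+ N / (1 - gamma).
Proof.
move=> wM N; set s := series _; have cvs : cvgn s := is_cvg_discounted_series wM.
have cvsN : cvgn (s - cst (s N)) by apply: is_cvgB => //; exact: is_cvg_cst.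
rewrite -[s N](lim_cst _ (s N) (F := \oo)) // -limB //; last exact: is_cvg_cst.
rewrite -lim_norm //; apply: limr_le; first exact: is_cvg_norm.
by near=> n; apply: (discounted_partial_tail wM); near: n; exact: nbhs_infty_ge.
Unshelve. all: by end_near.
Qed.

Lemma discounted_series_cvg {T : Type} (F : set_system T) {FF : Filter F}
    (w : T -> nat -> R) (w0 : nat -> R) M :
  (forall t, w x t @[x --> F] --> w0 t) ->
  (\forall x \near F, forall t, `|w x t| <= M) -> (forall t, `|w0 t| <= M) ->
  limn (series (fun t => gamma ^+ t * w x t)) @[x --> F] -->
  limn (series (fun t => gamma ^+ t * w0 t)).
Proof.
move=> wcvg wM w0M; apply/cvgrPdist_lt => eps eps0.
have eps3 : 0 < eps / 3 by rewrite divr_gt0.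
have [N tailN] : exists N, M * gamma ^+ N / (1 - gamma) < eps / 3.
  have /cvgrPdist_lt/(_ _ eps3) : geometric (M / (1 - gamma)) gamma @ \oo --> 0.
    exact: cvg_geometric.
  move=> /filter_ex[N]; rewrite /geometric /= sub0r normrN mulrAC => tailN.
  by exists N; apply: le_lt_trans tailN; exact: ler_norm.
have /cvgrPdist_lt/(_ _ eps3) : series (fun t => gamma ^+ t * w x t) N @[x --> F] -->
    series (fun t => gamma ^+ t * w0 t) N.
  apply: cvg_big => //; first exact: add_continuous.
  by move=> t _; apply: cvgM; [exact: cvg_cst | exact: wcvg].
apply: filterS2 wM => x wxM headN.
have := discounted_series_tail w0M N; have := discounted_series_tail wxM N.
move: headN; set S0 := series (fun t => gamma ^+ t * w0 t) N.
set Sx := series (fun t => gamma ^+ t * w x t) N.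
set V0 := limn (series (fun t => gamma ^+ t * w0 t)).
set Vx := limn (series (fun t => gamma ^+ t * w x t)).
rewrite [`|Vx - Sx|]distrC => ? ? ?.
have := ler_distD S0 V0 Vx; have := ler_distD Sx S0 Vx; lra.
Qed.

End DiscountedSeries.

Section XlnX.
Context {R : realType}.

(* From [ln (1 / sqrt x) < 1 / sqrt x]; for [x <= 0], [ln x] is [0]. *)
Lemma normr_xlnx_le (x : R) : `|x| <= 1 -> `|x * ln x| <= 2 * Num.sqrt `|x|.
Proof.
have [x_le0 _|x_gt0] := leP x 0; first by rewrite ln0 // mulr0 normr0 mulr_ge0 ?sqrtr_ge0.
rewrite gtr0_norm // => x_le1; set s := Num.sqrt x.
have s_gt0 : 0 < s by rewrite sqrtr_gt0.
have xE : x = s ^+ 2 by rewrite sqr_sqrtr // ltW.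
have lns : - ln s < s^-1 by rewrite -lnV ?posrE // ln_sublinear ?invr_gt0.
rewrite ler0_norm; last exact: mulr_ge0_le0 (ltW x_gt0) (ln_le0 x_le1).
have : s ^+ 2 * - ln s <= s.
  apply: le_trans (ler_wpM2l (sqr_ge0 s) (ltW lns)) _.
  by rewrite expr2 -mulrA mulfV ?gt_eqF ?mulr1.
by rewrite xE lnXn // -mulr_natr; lra.
Qed.

Lemma continuous_xlnx (x : R) : 0 <= x -> {for x, continuous (fun y : R => y * ln y)}.
Proof.
rewrite le_eqVlt => /predU1P[<- | x_gt0]; last first.
  by apply: cvgM; [exact: cvg_id | exact: continuous_ln].
have bound_cvg : (fun y : R => 2 * Num.sqrt `|y|) @ (0 : R) --> 2 * Num.sqrt `|0 : R|.
  apply: cvgM; first exact: cvg_cst.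
  exact: continuous_comp (@norm_continuous _ R^o 0) (@sqrt_continuous R _).
rewrite normr0 sqrtr0 mulr0 in bound_cvg.
have := cvgN bound_cvg; rewrite oppr0 => nbound_cvg.
rewrite /prop_for /continuous_at mul0r.
apply: squeeze_cvgr; [|exact: nbound_cvg|exact: bound_cvg].
near=> y; rewrite -ler_norml; apply: normr_xlnx_le.
by near: y; apply: (@nbhs0_le _ R^o); exact: ltr01.
Unshelve. all: by end_near.
Qed.

End XlnX.

Lemma policy_le1 {R : realType} {S A : finType} (pi : S -> A -> R) s a :
  is_policy pi -> pi s a <= 1.
Proof.
by case=> pi_ge0 pi_sum1; rewrite -(pi_sum1 s) (bigD1 a) //= lerDl sumr_ge0.
Qed.

Section ValueContinuity.
Context {R : realType} {S A : finType} (P : S -> A -> S -> R) (rho : S -> R).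
Hypotheses (P_ge0 : forall s a s', 0 <= P s a s')
  (P_sum1 : forall s a, \sum_s' P s a s' = 1).
Hypotheses (rho_ge0 : forall s, 0 <= rho s) (rho_sum1 : \sum_s rho s = 1).

Lemma state_dist_ge0 pi t s : is_policy pi -> 0 <= state_dist P rho pi t s.
Proof.
case=> pi_ge0 _; elim: t s => [|t IHt] s' //=.
by apply: sumr_ge0 => s _; apply: sumr_ge0 => a _; rewrite !mulr_ge0.
Qed.

Lemma state_dist_sum1 pi t : is_policy pi -> \sum_s state_dist P rho pi t s = 1.
Proof.
case=> _ pi_sum1; elim: t => [|t IHt] //=.
rewrite exchange_big /= -[RHS]IHt; apply: eq_bigr => s _; rewrite exchange_big /=.
under eq_bigr do rewrite -big_distrr /= P_sum1 mulr1.
by rewrite -big_distrr /= pi_sum1 mulr1.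
Qed.

Lemma normr_step_expect_le pi f C t : is_policy pi ->
  (forall s a, `|pi s a * f s a| <= C) -> `|step_expect P rho pi f t| <= #|A|%:R * C.
Proof.
move=> pi_policy piC.
rewrite -[leRHS]mul1r -{1}(state_dist_sum1 pi t pi_policy) mulr_suml.
apply: le_trans (ler_norm_sum _ _ _) _; apply: ler_sum => s _.
apply: le_trans (ler_norm_sum _ _ _) _.
have -> : #|A|%:R * C = \sum_(a : A) C by rewrite sumr_const mulr_natl.
rewrite mulr_sumr; apply: ler_sum => a _.
by rewrite -mulrA normrM ger0_norm ?state_dist_ge0 // ler_wpM2l ?state_dist_ge0.
Qed.

Context {T : Type} (F : set_system T) {FF : Filter F}.
Variables (pif : T -> S -> A -> R) (pi0 : S -> A -> R).
Hypothesis pif_cvg : forall s a, pif x s a @[x --> F] --> pi0 s a.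

Lemma state_dist_cvg t s :
  state_dist P rho (pif x) t s @[x --> F] --> state_dist P rho pi0 t s.
Proof.
elim: t s => [|t IHt] s' /=; first exact: cvg_cst.
apply: cvgr_sum => s; apply: cvgr_sum => a.
by apply: cvgM; [apply: cvgM|exact: cvg_cst]; [exact: IHt | exact: pif_cvg].
Qed.

Lemma step_expect_cvg (f : T -> S -> A -> R) (f0 : S -> A -> R) :
  (forall s a, pif x s a * f x s a @[x --> F] --> pi0 s a * f0 s a) ->
  forall t, step_expect P rho (pif x) (f x) t @[x --> F] --> step_expect P rho pi0 f0 t.
Proof.
move=> pif_f_cvg t.
have step_expectE pi h : step_expect P rho pi h t =
    \sum_s \sum_a state_dist P rho pi t s * (pi s a * h s a).
  by apply: eq_bigr => s _; apply: eq_bigr => a _; rewrite mulrA.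
rewrite step_expectE; under eq_cvg do rewrite step_expectE.
apply: cvgr_sum => s; apply: cvgr_sum => a.
by apply: cvgM; [exact: state_dist_cvg | exact: pif_f_cvg].
Qed.

Hypotheses (pif_policy : \forall x \near F, is_policy (pif x))
  (pi0_policy : is_policy pi0).
Variable gamma : R.
Hypothesis gamma01 : 0 < gamma < 1.

(* The bounds are on [pi s a * f s a], not on [f]: for the entropy, [f = ln pi]
   is unbounded. *)
Lemma disc_value_cvg (f : T -> S -> A -> R) (f0 : S -> A -> R) C :
  (forall s a, pif x s a * f x s a @[x --> F] --> pi0 s a * f0 s a) ->
  (\forall x \near F, forall s a, `|pif x s a * f x s a| <= C) ->
  (forall s a, `|pi0 s a * f0 s a| <= C) ->
  disc_value P rho gamma (pif x) (f x) @[x --> F] --> disc_value P rho gamma pi0 f0.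
Proof.
move=> pif_f_cvg fC f0C; apply: (discounted_series_cvg _ gamma01 F _ _ (#|A|%:R * C)).
- exact: step_expect_cvg.
- by apply: filterS2 pif_policy fC => x pix fxC t; exact: normr_step_expect_le.
- by move=> t; exact: normr_step_expect_le.
Qed.

Lemma Vr_cvg (r : S -> A -> R) :
  Vr P rho gamma (pif x) r @[x --> F] --> Vr P rho gamma pi0 r.
Proof.
pose C := \big[Num.max/0]_(p : S * A) `|r p.1 p.2|.
have policy_rC pi s a : is_policy pi -> `|pi s a * r s a| <= C.
  move=> pi_policy; rewrite normrM ger0_norm; last by case: pi_policy.
  apply: le_trans (le_bigmax _ (fun p => `|r p.1 p.2|) (s, a)).
  by rewrite ler_piMl // policy_le1.
apply: (disc_value_cvg _ _ C).
- by move=> s a; apply: cvgM; [exact: pif_cvg | exact: cvg_cst].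
- by apply: filterS pif_policy => x pix s a; exact: policy_rC.
- by move=> s a; exact: policy_rC.
Qed.

Lemma entropy_cvg : entropy P rho gamma (pif x) @[x --> F] --> entropy P rho gamma pi0.
Proof.
have policy_xlnx (pi : S -> A -> R) s a : is_policy pi -> `|pi s a * ln (pi s a)| <= 2.
  move=> pi_policy; have pi_ge0 : 0 <= pi s a by case: pi_policy.
  have pi_le1 := policy_le1 pi s a pi_policy.
  apply: le_trans (normr_xlnx_le _ _) _; first by rewrite ger0_norm.
  by rewrite ger_pMr // -sqrtr1 ler_wsqrtr // ger0_norm.
apply: cvgN; apply: (disc_value_cvg _ _ 2).
- move=> s a; apply: (@cvg_comp _ _ _ (fun x => pif x s a) (fun y : R => y * ln y)).
    exact: pif_cvg.
  by apply: continuous_xlnx; case: pi0_policy.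
- by apply: filterS pif_policy => x pix s a; exact: policy_xlnx.
- by move=> s a; exact: policy_xlnx.
Qed.

End ValueContinuity.

Section PolicyRows.
Context {R : realType} {S A : finType}.

Definition policy_of_row (v : 'rV[R]_#|{: S * A}|) : S -> A -> R :=
  fun s a => v ord0 (enum_rank (s, a)).

Definition row_of_policy (pi : S -> A -> R) : 'rV[R]_#|{: S * A}| :=
  \row_i pi (enum_val i).1 (enum_val i).2.

Lemma row_of_policyK : cancel row_of_policy policy_of_row.
Proof.
by move=> pi; apply/funext => s; apply/funext => a; rewrite /policy_of_row mxE enum_rankK.
Qed.

Definition policy_rows : set 'rV[R]_#|{: S * A}| := [set v | is_policy (policy_of_row v)].

Lemma continuous_policy_of_row s a : continuous (fun v => policy_of_row v s a).
Proof. by move=> v; exact: coord_continuous. Qed.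

Lemma compact_policy_rows : compact policy_rows.
Proof.
pose box := [set v : 'rV[R]_#|{: S * A}| | forall i, `[0, 1]%classic (v ord0 i)].
pose rows_sum1 := \bigcap_(s in [set: S])
  ((fun v => \sum_a policy_of_row v s a) @^-1` [set 1]).
have -> : policy_rows = box `&` rows_sum1.
  apply/seteqP; split => [v [v_ge0 v_sum1]|v [v01 v_sum1]]; last first.
    by split=> [s a|s]; [case/andP: (v01 (enum_rank (s, a))) | exact: v_sum1].
  split=> [i|s _] /=; last exact: v_sum1.
  have := v_ge0 (enum_val i).1 (enum_val i).2.
  have := policy_le1 _ (enum_val i).1 (enum_val i).2 (conj v_ge0 v_sum1).
  by rewrite /policy_of_row -surjective_pairing enum_valK in_itv /= => -> ->.
apply: compact_closedI.
  by apply: (@rV_compact _ _ (fun=> `[0 : R, 1]%classic)) => i; exact: segment_compact.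
apply: closed_bigI => s _; apply: preimage_closed; last exact: closed_eq.
move=> v _; apply: (@cvgr_sum _ _ _ (nbhs_filter v)) => a.
exact: continuous_policy_of_row.
Qed.

End PolicyRows.

Section DualAsSupremum.
Context {R : realType} {S A : finType} {m : nat}.
Variables (P : S -> A -> S -> R) (rho : S -> R) (gamma : R).
Variables (r0 : S -> A -> R) (r : 'I_m -> S -> A -> R) (c : 'rV[R]_m) (tau : R).

Definition regularized_value (v : 'rV[R]_#|{: S * A}|) : R :=
  Vr P rho gamma (policy_of_row v) r0 + tau * entropy P rho gamma (policy_of_row v).

Definition constraint_slack (i : 'I_m) (v : 'rV[R]_#|{: S * A}|) : R :=
  Vr P rho gamma (policy_of_row v) (r i) - c ord0 i.

Lemma lagrangian_policy_rowsE lam v :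
  lagrangian regularized_value constraint_slack lam v =
  lagr P rho gamma r0 r c tau (policy_of_row v) lam.
Proof.
rewrite /lagrangian /lagr /regularized_value addrAC; congr (_ + _ + _).
by apply: eq_bigr => i _; rewrite mulrC.
Qed.

Lemma dual_policy_rowsE :
  dual P rho gamma r0 r c tau = dual_fun policy_rows regularized_value constraint_slack.
Proof.
apply/funext => lam; rewrite /dual /dual_fun; congr sup.
apply/seteqP; split => _ [x Kx <-].
  by exists (row_of_policy x);
    rewrite /policy_rows /= ?lagrangian_policy_rowsE row_of_policyK.
by exists (policy_of_row x); rewrite ?lagrangian_policy_rowsE.
Qed.

Hypotheses (P_ge0 : forall s a s', 0 <= P s a s')
  (P_sum1 : forall s a, \sum_s' P s a s' = 1).
Hypotheses (rho_ge0 : forall s, 0 <= rho s) (rho_sum1 : \sum_s rho s = 1).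
Hypothesis gamma01 : 0 < gamma < 1.

Let within_rows_cvg (v : 'rV[R]_#|{: S * A}|) (s : S) (a : A) :
  policy_of_row w s a @[w --> within policy_rows (nbhs v)] --> policy_of_row v s a.
Proof. by apply: cvg_within_filter; exact: continuous_policy_of_row. Qed.

Let within_rows_policy (v : 'rV[R]_#|{: S * A}|) :
  \forall w \near within policy_rows (nbhs v), is_policy (policy_of_row w).
Proof. exact: withinT. Qed.

Lemma continuous_regularized_value : {within policy_rows, continuous regularized_value}.
Proof.
apply/subspace_continuousP => v Kv; apply: cvgD; first by apply: Vr_cvg.
by apply: cvgM; [exact: cvg_cst | apply: entropy_cvg].
Qed.

Lemma continuous_constraint_slack i : {within policy_rows, continuous constraint_slack i}.
Proof.
by apply/subspace_continuousP => v Kv; apply: cvgB; [apply: Vr_cvg | exact: cvg_cst].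
Qed.

End DualAsSupremum.

Theorem proposition1 (R : realType) (S A : finType) (m : nat)
  (P : S -> A -> S -> R) (rho : S -> R) (gamma : R)
  (r0 : S -> A -> R) (r : 'I_m -> S -> A -> R) (c : 'rV[R]_m)
  (xi tau : R) :
  (* finite MDP data *)
  (forall s a s', 0 <= P s a s') ->
  (forall s a, \sum_(s' : S) P s a s' = 1) ->
  (forall s, 0 <= rho s) -> \sum_(s : S) rho s = 1 ->
  0 < gamma < 1 ->
  (forall s a, 0 < r0 s a) -> (forall i s a, 0 < r i s a) ->
  (* Slater condition with constant xi *)
  0 < xi ->
  (exists2 pixi, Policies pixi &
     forall i, Vr P rho gamma pixi (r i) >= c ord0 i + xi) ->
  0 < tau ->
  (* uniqueness of the optimal policy for every lambda in Lambda *)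
  (forall lam, LamSet r0 gamma xi lam ->
     exists pistar, Policies pistar /\
       lagr P rho gamma r0 r c tau pistar lam = dual P rho gamma r0 r c tau lam /\
       forall pi, Policies pi ->
         lagr P rho gamma r0 r c tau pi lam = dual P rho gamma r0 r c tau lam ->
         pi = pistar) ->
  forall lam, LamSet r0 gamma xi lam ->
    differentiable (dual P rho gamma r0 r c tau) lam /\
    forall pistar, Policies pistar ->
      lagr P rho gamma r0 r c tau pistar lam = dual P rho gamma r0 r c tau lam ->
      forall h : 'rV[R]_m,
        'd (dual P rho gamma r0 r c tau) lam h =
        \sum_(i < m) (Vr P rho gamma pistar (r i) - c ord0 i) * h ord0 i.
Proof.
move=> P_ge0 P_sum1 rho_ge0 rho_sum1 gamma01 _ _ _ _ _ unique_opt lam /unique_opt.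
move=> [pistar [pistar_policy [pistar_opt pistar_unique]]].
set x0 := row_of_policy pistar.
set F := regularized_value P rho gamma r0 tau; set g := constraint_slack P rho gamma r c.
have x0_row : policy_rows x0 by rewrite /policy_rows /= row_of_policyK.
have x0_max : lagrangian F g lam x0 = dual_fun policy_rows F g lam.
  by rewrite lagrangian_policy_rowsE row_of_policyK -dual_policy_rowsE.
have argmax_slack v : policy_rows v ->
    lagrangian F g lam v = dual_fun policy_rows F g lam -> forall i, g i v = g i x0.
  move=> Kv; rewrite lagrangian_policy_rowsE -dual_policy_rowsE.
  move=> /(pistar_unique _ Kv) vE i.
  by rewrite /g /constraint_slack vE row_of_policyK.
have contF : {within policy_rows, continuous F} by exact: continuous_regularized_value.
have contg i : {within policy_rows, continuous g i} by exact: continuous_constraint_slack.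
have [diff_dual d_dual] :=
  danskin _ F g compact_policy_rows contF contg _ lam x0_row x0_max argmax_slack.
rewrite dual_policy_rowsE; split=> // pi /pistar_unique pi_unique.
rewrite -dual_policy_rowsE => /pi_unique -> h; rewrite dual_policy_rowsE d_dual.
by apply: eq_bigr => i _; rewrite /g /x0 /constraint_slack row_of_policyK.
Qed.
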